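(* Let $n\ge2$, $m\ge1$, $\lambda_0\ne0$, $\lambda_1>0$, $\lambda_2\ge0$, $\omega\in\mathbb{R}$, and run a PIFO algorithm with initial point $x_0=0$ and sampling probabilities $(p_1,\dots,p_n)$ on the components $f_i=r_i(\cdot;\lambda_0,\lambda_1,\lambda_2,m,\omega)$, $i=1,\dots,n$. Define $T_0=0$ and, for $k\ge1$, $T_k=\min\{t:t>T_{k-1},\ i_t\equiv k\pmod n\}$. Then for every $1\le k\le m$ and every $t<T_k$ we have $x_t\in\mathcal{F}_{k-1}$. Moreover, for every $k\ge1$, $T_k=\sum_{l=1}^kY_l$ where $Y_1,\dots,Y_k$ are independent and $Y_l$ is geometrically distributed with success probability $q_l=p_{l'}$, where $l'\in\{1,\dots,n\}$ and $l'\equiv l\pmod n$ (a geometric variable with success probability $0$ is $+\infty$ almost surely).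
   Context: For $\omega\in\mathbb{R}$, $B(m,\omega)\in\mathbb{R}^{m\times m}$ is the matrix whose row $l$, for $1\le l\le m-1$, has entry $-1$ in column $m-l$ and entry $1$ in column $m-l+1$, and whose row $m$ is $\omega e_1^\top$; $b_l(m,\omega)^\top$ is its $l$-th row. $\mathcal{L}_i=\{l:1\le l\le m,\ l\equiv i-1\pmod n\}$. $r_1(x)=\lambda_1\sum_{l\in\mathcal{L}_1}(b_l(m,\omega)^\top x)^2+\lambda_2\|x\|_2^2-\lambda_0\langle e_m,x\rangle$ and $r_i(x)=\lambda_1\sum_{l\in\mathcal{L}_i}(b_l(m,\omega)^\top x)^2+\lambda_2\|x\|_2^2$ for $i\ge2$, $x\in\mathbb{R}^m$. $\mathcal{F}_0=\{0\}$, $\mathcal{F}_k=\mathrm{span}\{e_m,\dots,e_{m-k+1}\}$. A random variable $Y$ is geometric with success probability $p$ if $\mathbb{P}(Y=s)=(1-p)^{s-1}p$ for $s=1,2,\dots$. For $\gamma>0$, $\mathrm{prox}^{\gamma}_g(x)=\arg\min_u\{g(u)+\frac{1}{2\gamma}\|x-u\|_2^2\}$. PIFO algorithm: a probability vector $(p_1,\dots,p_n)$, initial point $x_0$, parameters $\gamma_t>0$; indices $i_1,i_2,\dots$ drawn independently with $\mathbb{P}(i_t=j)=p_j$; iterates $x_t\in\mathrm{span}\{x_0,\dots,x_{t-1},\nabla f_{i_1}(x_0),\dots,\nabla f_{i_t}(x_{t-1}),\mathrm{prox}^{\gamma_1}_{f_{i_1}}(x_0),\dots,\mathrm{prox}^{\gamma_t}_{f_{i_t}}(x_{t-1})\}$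 for $t\ge1$. *)

From Stdlib Require Import Reals Lra Lia Arith List ClassicalEpsilon.
Open Scope R_scope.

(* Vectors of R^m are represented as functions nat -> R; only the
   coordinates 1..m are meaningful (everything below only looks at them). *)

Fixpoint sumR (n : nat) (f : nat -> R) : R :=
  match n with O => 0 | S n' => sumR n' f + f n end.

Fixpoint prodR (n : nat) (f : nat -> R) : R :=
  match n with O => 1 | S n' => prodR n' f * f n end.

Fixpoint sumN (n : nat) (s : nat -> nat) : nat :=
  match n with O => O | S n' => (sumN n' s + s n)%nat end.

(* b_l(m,omega)^T x : row l of B(m,omega) applied to x, for 1 <= l <= m.
   Rows l < m: -1 in column m-l, +1 in column m-l+1; row m: omega e_1^T. *)
Definition bdot (m : nat) (omega : R) (l : nat) (x : nat -> R) : R :=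
  if Nat.ltb l m then x (m - l + 1)%nat - x (m - l)%nat else omega * x 1%nat.

(* r_i(x; lam0, lam1, lam2, m, omega); L_i = {l in 1..m | l = i-1 mod n}. *)
Definition r (n m : nat) (omega lam0 lam1 lam2 : R) (i : nat) (x : nat -> R) : R :=
  lam1 * sumR m (fun l => if Nat.eqb (l mod n) ((i - 1) mod n)
                          then (bdot m omega l x) ^ 2 else 0)
  + lam2 * sumR m (fun j => x j ^ 2)
  - (if Nat.eqb i 1 then lam0 * x m else 0).

Definition normsq (m : nat) (v : nat -> R) : R := sumR m (fun j => v j ^ 2).

Definition is_grad (m : nat) (f : (nat -> R) -> R) (x g : nat -> R) : Prop :=
  forall j, (1 <= j <= m)%nat ->
    derivable_pt_lim (fun s => f (fun k => if Nat.eqb k j then x k + s else x k)) 0 (g j).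

Definition is_prox (m : nat) (f : (nat -> R) -> R) (gam : R) (x u : nat -> R) : Prop :=
  forall v : nat -> R,
    f u + / (2 * gam) * normsq m (fun j => x j - u j)
    <= f v + / (2 * gam) * normsq m (fun j => x j - v j).

(* v lies in span{x_0..x_{t-1}, G_1..G_t, P_1..P_t} (in R^m) *)
Definition in_span (m t : nat) (x G P : nat -> nat -> R) (v : nat -> R) : Prop :=
  exists a b c : nat -> R, forall j, (1 <= j <= m)%nat ->
    v j = sumR t (fun s => a s * x (s - 1)%nat j + b s * G s j + c s * P s j).

(* x in F_k = span{e_m, ..., e_{m-k+1}} (for k <= m) *)
Definition inF (m k : nat) (x : nat -> R) : Prop :=
  forall j, (1 <= j <= m - k)%nat -> x j = 0.

(* IsT i n k T : the hitting time T_k (defined from the index sequence i)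
   is finite and equals T.  T_0 = 0,
   T_k = min{ t > T_{k-1} | i_t = k mod n }. *)
Inductive IsT (i : nat -> nat) (n : nat) : nat -> nat -> Prop :=
| IsT0 : IsT i n 0 0
| IsTS : forall k T T', IsT i n k T -> (T < T')%nat ->
    (i T' mod n = S k mod n)%nat ->
    (forall t, (T < t < T')%nat -> (i t mod n <> S k mod n)%nat) ->
    IsT i n (S k) T'.

(* q_l = p_{l'}, l' in 1..n, l' = l mod n (for l >= 1) *)
Definition q (n : nat) (p : nat -> R) (l : nat) : R := p (S ((l - 1) mod n)).

Definition indic (P : Prop) : R :=
  if excluded_middle_informative P then 1 else 0.

(* index sequence t |-> i_t (t >= 1) determined by a finite word *)
Definition seq_of (w : list nat) : nat -> nat := fun t => nth (t - 1) w 1%nat.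

(* sum over all words (i_1,...,i_N) in {1..n}^N of p_{i_1}...p_{i_N} F(word) *)
Fixpoint wsum (n : nat) (p : nat -> R) (N : nat) (F : list nat -> R) : R :=
  match N with
  | O => F nil
  | S N' => sumR n (fun j => p j * wsum n p N' (fun w => F (j :: w)))
  end.

(* Probability, for i_1, i_2, ... i.i.d. with P(i_t = j) = p_j, of an event E
   on index sequences that depends only on (i_1, ..., i_N). *)
Definition prob_prefix (n : nat) (p : nat -> R) (N : nat)
  (E : (nat -> nat) -> Prop) : R :=
  wsum n p N (fun w => indic (E (seq_of w))).

From Stdlib Require Import Reals Lra Lia Arith List.
From Stdlib Require Import Classical ClassicalEpsilon FunctionalExtensionality.
Open Scope R_scope.

(* Call f on R^m "shrink-monotone at d" when scaling the
   coordinates 1..d by a factor c with c^2 <= 1 never increases f.  For such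
   an f, the gradient and every proximal point at a point vanishing on 1..d
   again vanish on 1..d: the gradient because f is even in each of these
   coordinates, the proximal point because truncating it to 0 on 1..d gives
   a candidate at least as good.  The component r_i is shrink-monotone at
   d = m-(k-1) whenever i is not congruent to k mod n, since then none of its
   terms couples coordinate d with d+1.  A strong induction on t, using that
   an index congruent to k occurring before T_k must occur before T_{k-1},
   shows that every oracle answer, hence every iterate, lies in F_{k-1}.

   The probability of an event depending on the first N
   indices is a weighted sum over words of length N.  The event
   {T_l = s_1 + ... + s_l for l <= k+1} splits into the event for l <= k on
   the first T_k letters and the event "the first letter congruent to k+1 in
   the next block of s_{k+1} letters is its last one", which has probability
   (1-q)^(s_{k+1}-1) q; induction on k yields the product formula. *)

Lemma sumR_ext (N : nat) (f g : nat -> R) :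
  (forall j, (1 <= j <= N)%nat -> f j = g j) -> sumR N f = sumR N g.
Proof.
  induction N as [|N IH]; intros H; simpl; [reflexivity|].
  rewrite IH by (intros; apply H; lia). rewrite H by lia. reflexivity.
Qed.

Lemma sumR_le (N : nat) (f g : nat -> R) :
  (forall j, (1 <= j <= N)%nat -> f j <= g j) -> sumR N f <= sumR N g.
Proof.
  induction N as [|N IH]; intros H; simpl; [lra|].
  assert (sumR N f <= sumR N g) by (apply IH; intros; apply H; lia).
  assert (f (S N) <= g (S N)) by (apply H; lia). lra.
Qed.

Lemma sumR_zero (N : nat) : sumR N (fun _ => 0) = 0.
Proof. induction N as [|N IH]; simpl; [reflexivity|]. rewrite IH. ring. Qed.

Lemma sumR_plus (N : nat) (f g : nat -> R) :
  sumR N (fun j => f j + g j) = sumR N f + sumR N g.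
Proof. induction N as [|N IH]; simpl; [ring|]. rewrite IH. ring. Qed.

Lemma sumR_minus (N : nat) (f g : nat -> R) :
  sumR N (fun j => f j - g j) = sumR N f - sumR N g.
Proof. induction N as [|N IH]; simpl; [ring|]. rewrite IH. ring. Qed.

Lemma sumR_scal (N : nat) (c : R) (f : nat -> R) :
  sumR N (fun j => c * f j) = c * sumR N f.
Proof. induction N as [|N IH]; simpl; [ring|]. rewrite IH. ring. Qed.

Lemma sumR_point (N j : nat) (f : nat -> R) :
  (1 <= j <= N)%nat -> sumR N (fun l => if Nat.eq_dec l j then f l else 0) = f j.
Proof.
  induction N as [|N IH]; intros Hj; [lia|].
  change (sumR (S N) ?g) with (sumR N g + g (S N)). cbv beta.
  destruct (Nat.eq_dec (S N) j) as [<-|Hne].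
  - rewrite (sumR_ext N _ (fun _ => 0)), sumR_zero; [ring|].
    intros l Hl. destruct (Nat.eq_dec l (S N)); [lia|reflexivity].
  - rewrite IH by lia. ring.
Qed.

Lemma sumR_nonneg_eq0 (N : nat) (f : nat -> R) :
  (forall j, (1 <= j <= N)%nat -> 0 <= f j) -> sumR N f <= 0 ->
  forall j, (1 <= j <= N)%nat -> f j = 0.
Proof.
  intros Hf Hs j Hj.
  assert (Hle : sumR N (fun l => if Nat.eq_dec l j then f l else 0) <= sumR N f).
  { apply sumR_le. intros l Hl. destruct (Nat.eq_dec l j); [lra|]. apply Hf, Hl. }
  rewrite sumR_point in Hle by exact Hj.
  pose proof (Hf j Hj). lra.
Qed.

Lemma mod_succ_iff (n a b : nat) :
  n <> 0%nat -> (S a mod n = S b mod n <-> a mod n = b mod n)%nat.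
Proof.
  intros Hn.
  assert (Hback : forall c, (c mod n = (S c mod n + (n - 1)) mod n)%nat).
  { intro c. rewrite Nat.Div0.add_mod_idemp_l.
    replace (S c + (n - 1))%nat with (c + 1 * n)%nat by lia.
    symmetry. apply Nat.Div0.mod_add. }
  split; intros E.
  - rewrite (Hback a), (Hback b), E. reflexivity.
  - replace (S a) with (a + 1)%nat by lia. replace (S b) with (b + 1)%nat by lia.
    rewrite <- (Nat.Div0.add_mod_idemp_l a), <- (Nat.Div0.add_mod_idemp_l b), E.
    reflexivity.
Qed.

Lemma mod_succ_neq (n a : nat) : (2 <= n)%nat -> (a mod n <> S a mod n)%nat.
Proof.
  intros Hn E.
  pose proof (Nat.mod_upper_bound a n ltac:(lia)).
  replace (S a) with (a + 1)%nat in E by lia.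
  rewrite <- Nat.Div0.add_mod_idemp_l in E.
  destruct (Nat.eq_dec (a mod n + 1) n) as [Hwrap|Hwrap].
  - rewrite Hwrap, Nat.Div0.mod_same in E. rewrite E in Hwrap. lia.
  - rewrite (Nat.mod_small (a mod n + 1)) in E; lia.
Qed.

Lemma residue_rep (n k j : nat) :
  n <> 0%nat -> (1 <= j <= n)%nat -> (j mod n = S k mod n <-> j = S (k mod n))%nat.
Proof.
  intros Hn Hj. pose proof (Nat.mod_upper_bound k n Hn).
  replace j with (S (j - 1)) by lia.
  rewrite mod_succ_iff, (Nat.mod_small (j - 1)) by lia. lia.
Qed.

Definition vanish (d : nat) (v : nat -> R) : Prop :=
  forall j, (1 <= j <= d)%nat -> v j = 0.

Lemma vanish_mono (d d' : nat) (v : nat -> R) :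
  (d' <= d)%nat -> vanish d v -> vanish d' v.
Proof. intros Hd Hv j Hj. apply Hv. lia. Qed.

Definition scale_low (d : nat) (c : R) (v : nat -> R) : nat -> R :=
  fun j => if andb (Nat.leb 1 j) (Nat.leb j d) then c * v j else v j.

Definition shrink_mono (d : nat) (f : (nat -> R) -> R) : Prop :=
  forall (c : R) (v : nat -> R), c * c <= 1 -> f (scale_low d c v) <= f v.

Lemma even_deriv_zero (phi : R -> R) (l : R) :
  (forall s, phi (- s) = phi s) -> derivable_pt_lim phi 0 l -> l = 0.
Proof.
  intros Heven Hd.
  assert (Hopp : derivable_pt_lim (opp_fct id) 0 (-1))
    by (apply derivable_pt_lim_opp, derivable_pt_lim_id).
  assert (Hd0 : derivable_pt_lim phi (opp_fct id 0) l)
    by (unfold opp_fct, id; rewrite Ropp_0; exact Hd).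
  pose proof (derivable_pt_lim_comp _ _ _ _ _ Hopp Hd0) as Hcomp.
  replace (comp phi (opp_fct id)) with phi in Hcomp
    by (apply functional_extensionality; intro s; symmetry; apply Heven).
  pose proof (uniqueness_limite _ _ _ _ Hd Hcomp). lra.
Qed.

(* Gradients of shrink-monotone functions preserve vanishing on 1..d:
   each partial derivative there is that of an even function. *)
Lemma grad_vanish (m d : nat) (f : (nat -> R) -> R) (x g : nat -> R) :
  (d <= m)%nat -> shrink_mono d f -> vanish d x -> is_grad m f x g -> vanish d g.
Proof.
  intros Hdm Hf Hx Hg j Hj.
  apply (even_deriv_zero (fun s => f (fun k => if Nat.eqb k j then x k + s else x k)));
    [|apply Hg; lia].
  intro s. cbv beta.
  set (y := fun k => if Nat.eqb k j then x k + s else x k).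
  assert (Hflip : (fun k => if Nat.eqb k j then x k + - s else x k) = scale_low d (-1) y).
  { apply functional_extensionality. intro k. unfold scale_low, y.
    destruct (Nat.eqb_spec k j) as [->|Hkj].
    - destruct (Nat.leb_spec 1 j); destruct (Nat.leb_spec j d); try lia. simpl.
      rewrite (Hx j Hj). ring.
    - destruct (Nat.leb_spec 1 k); destruct (Nat.leb_spec k d); simpl; try ring.
      rewrite (Hx k) by lia. ring. }
  assert (Hinv : scale_low d (-1) (scale_low d (-1) y) = y).
  { apply functional_extensionality. intro k. unfold scale_low.
    destruct (andb _ _); ring. }
  rewrite Hflip. apply Rle_antisym; [apply Hf; lra|].
  pose proof (Hf (-1) (scale_low d (-1) y) ltac:(lra)) as Hback.
  rewrite Hinv in Hback. exact Hback.
Qed.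

(* Proximal points of shrink-monotone functions preserve vanishing on 1..d:
   truncating a proximal point on 1..d lowers both terms of the objective. *)
Lemma prox_vanish (m d : nat) (f : (nat -> R) -> R) (gam : R) (x u : nat -> R) :
  (d <= m)%nat -> 0 < gam -> shrink_mono d f -> vanish d x ->
  is_prox m f gam x u -> vanish d u.
Proof.
  intros Hdm Hgam Hf Hx Hp.
  set (D := fun j => if andb (Nat.leb 1 j) (Nat.leb j d) then u j ^ 2 else 0).
  assert (Hsplit : normsq m (fun j => x j - u j) =
                   normsq m (fun j => x j - scale_low d 0 u j) + sumR m D).
  { unfold normsq. rewrite <- sumR_plus. apply sumR_ext. intros j Hj.
    unfold scale_low, D.
    destruct (Nat.leb_spec 1 j); destruct (Nat.leb_spec j d); simpl; try ring.
    rewrite (Hx j) by lia. ring. }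
  assert (HD : forall j, (1 <= j <= m)%nat -> 0 <= D j).
  { intros j _. unfold D. destruct (andb _ _); [apply pow2_ge_0|lra]. }
  assert (HDle : sumR m D <= 0).
  { pose proof (Hp (scale_low d 0 u)) as Hopt.
    pose proof (Hf 0 u ltac:(lra)) as Hshrink.
    assert (Hk : 0 < / (2 * gam)) by (apply Rinv_0_lt_compat; lra).
    rewrite Hsplit in Hopt.
    apply (Rmult_le_reg_l (/ (2 * gam))); [exact Hk|]. lra. }
  intros j Hj.
  pose proof (sumR_nonneg_eq0 m D HD HDle j ltac:(lia)) as Zj.
  unfold D in Zj. destruct (Nat.leb_spec 1 j); destruct (Nat.leb_spec j d); try lia.
  simpl in Zj. nra.
Qed.

Lemma span_vanish (m d t : nat) (x G P : nat -> nat -> R) (v : nat -> R) :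
  (d <= m)%nat ->
  (forall s, (1 <= s <= t)%nat ->
     vanish d (x (s - 1)%nat) /\ vanish d (G s) /\ vanish d (P s)) ->
  in_span m t x G P v -> vanish d v.
Proof.
  intros Hdm Hgen [a [b [c Hv]]] j Hj.
  rewrite (Hv j) by lia.
  transitivity (sumR t (fun _ => 0)); [|apply sumR_zero].
  apply sumR_ext. intros s Hs.
  destruct (Hgen s Hs) as [Hxs [HGs HPs]].
  rewrite (Hxs j Hj), (HGs j Hj), (HPs j Hj). ring.
Qed.

(* Row l < m of B touches columns m-l and m-l+1, row m only column 1; if the
   block 1..d does not separate them, scaling the block scales the row by 1 or c. *)
Lemma bdot_scale_low (m d l : nat) (omega c : R) (v : nat -> R) :
  (1 <= l <= m)%nat -> ((l < m)%nat -> (l + d <> m)%nat) ->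
  bdot m omega l (scale_low d c v) = bdot m omega l v \/
  bdot m omega l (scale_low d c v) = c * bdot m omega l v.
Proof.
  intros Hl Hd. unfold bdot, scale_low.
  destruct (Nat.ltb_spec l m);
  repeat match goal with |- context [Nat.leb ?a ?b] => destruct (Nat.leb_spec a b) end;
  simpl; first [ left; ring | right; ring | exfalso; lia ].
Qed.

(* r_i is shrink-monotone at d when none of its rows crosses d and its linear
   term lies outside 1..d. *)
Lemma r_shrink_mono (n m d : nat) (omega lam0 lam1 lam2 : R) (i : nat) :
  0 <= lam1 -> 0 <= lam2 ->
  (forall l, (1 <= l < m)%nat -> (l mod n = (i - 1) mod n)%nat -> (l + d <> m)%nat) ->
  (i = 1%nat -> (d < m)%nat) ->
  shrink_mono d (r n m omega lam0 lam1 lam2 i).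
Proof.
  intros H1 H2 Hrows Hlin c v Hc. unfold r.
  assert (Hquad : sumR m (fun l => if Nat.eqb (l mod n) ((i - 1) mod n)
                              then bdot m omega l (scale_low d c v) ^ 2 else 0)
               <= sumR m (fun l => if Nat.eqb (l mod n) ((i - 1) mod n)
                              then bdot m omega l v ^ 2 else 0)).
  { apply sumR_le. intros l Hl.
    destruct (Nat.eqb_spec (l mod n) ((i - 1) mod n)) as [E|E]; [|lra].
    destruct (bdot_scale_low m d l omega c v Hl) as [B|B].
    - intros. apply Hrows; [lia|exact E].
    - rewrite B. lra.
    - rewrite B. pose proof (pow2_ge_0 (bdot m omega l v)). nra. }
  assert (Hnorm : sumR m (fun j => scale_low d c v j ^ 2) <= sumR m (fun j => v j ^ 2)).
  { apply sumR_le. intros j _. unfold scale_low.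
    destruct (andb _ _); [|lra]. pose proof (pow2_ge_0 (v j)). nra. }
  assert (Hlinear : (if Nat.eqb i 1 then lam0 * scale_low d c v m else 0) =
                    (if Nat.eqb i 1 then lam0 * v m else 0)).
  { destruct (Nat.eqb_spec i 1) as [Ei|]; [|reflexivity].
    specialize (Hlin Ei). unfold scale_low.
    destruct (Nat.leb_spec m d); [lia|]. rewrite Bool.andb_false_r. reflexivity. }
  rewrite Hlinear.
  apply Rplus_le_compat_r, Rplus_le_compat; apply Rmult_le_compat_l; assumption.
Qed.

Lemma r_shrink_mono_level (n m k : nat) (omega lam0 lam1 lam2 : R) (i : nat) :
  n <> 0%nat -> (1 <= k <= m)%nat -> (1 <= i)%nat -> 0 <= lam1 -> 0 <= lam2 ->
  (i mod n <> k mod n)%nat ->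
  shrink_mono (m - (k - 1)) (r n m omega lam0 lam1 lam2 i).
Proof.
  intros Hn Hk Hi H1 H2 Hik. apply r_shrink_mono; [exact H1|exact H2| |].
  - intros l Hl Hli Hd. apply Hik.
    replace i with (S (i - 1)) by lia. replace k with (S l) by lia.
    rewrite mod_succ_iff by exact Hn. symmetry. exact Hli.
  - intros ->. destruct (Nat.eq_dec k 1) as [->|]; [contradiction|lia].
Qed.

Lemma IsT_next_exists (i : nat -> nat) (n K T s : nat) :
  IsT i n K T -> (T < s)%nat -> (i s mod n = S K mod n)%nat ->
  exists T', (T' <= s)%nat /\ IsT i n (S K) T'.
Proof.
  intros HT. induction s as [s IH] using lt_wf_ind. intros Hs Hi.
  destruct (classic (exists t, (T < t < s)%nat /\ (i t mod n = S K mod n)%nat))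
    as [[t [Ht Hti]]|Hnone].
  - destruct (IH t ltac:(lia) ltac:(lia) Hti) as [T' [HT's HT']].
    exists T'. split; [lia|exact HT'].
  - exists s. split; [lia|]. apply (IsTS i n K T s HT Hs Hi).
    intros t Ht E. apply Hnone. exists t. split; assumption.
Qed.

Lemma before_previous_hit (i : nat -> nat) (n k t s : nat) :
  (forall T, IsT i n (S k) T -> (t < T)%nat) -> (s <= t)%nat ->
  (i s mod n = S k mod n)%nat -> forall T, IsT i n k T -> (s <= T)%nat.
Proof.
  intros Hbefore Hst Hs T HT.
  destruct (Nat.le_gt_cases s T) as [|Hlt]; [assumption|exfalso].
  destruct (IsT_next_exists i n k T s HT Hlt Hs) as [T' [HT's HT']].
  specialize (Hbefore T' HT'). lia.
Qed.

Lemma iterates_in_F (n m : nat) (lam0 lam1 lam2 omega : R)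
    (i : nat -> nat) (gam : nat -> R) (x G P : nat -> nat -> R) :
  (2 <= n)%nat -> 0 <= lam1 -> 0 <= lam2 ->
  (forall t, (1 <= t)%nat -> (1 <= i t <= n)%nat) ->
  (forall t, (1 <= t)%nat -> 0 < gam t) ->
  (forall j, (1 <= j <= m)%nat -> x 0%nat j = 0) ->
  (forall t, (1 <= t)%nat ->
     is_grad m (r n m omega lam0 lam1 lam2 (i t)) (x (t - 1)%nat) (G t)) ->
  (forall t, (1 <= t)%nat ->
     is_prox m (r n m omega lam0 lam1 lam2 (i t)) (gam t) (x (t - 1)%nat) (P t)) ->
  (forall t, (1 <= t)%nat -> in_span m t x G P (x t)) ->
  forall k t : nat, (1 <= k <= m)%nat ->
    (forall T, IsT i n k T -> (t < T)%nat) -> inF m (k - 1) (x t).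
Proof.
  intros Hn H1 H2 Hi Hgam Hx0 HG HP Hsp k t. revert k.
  induction t as [t IH] using lt_wf_ind; intros k Hk Hbefore.
  destruct t as [|t']; [intros j Hj; apply Hx0; lia|].
  apply (span_vanish m (m - (k - 1)) (S t') x G P); [lia| |apply Hsp; lia].
  intros s Hs.
  (* a level k0 <= k at which r_{i_s} decouples and x_{s-1} is in F_{k0-1} *)
  assert (Hlevel : exists k0, (1 <= k0 <= k)%nat /\ (i s mod n <> k0 mod n)%nat /\
                              inF m (k0 - 1) (x (s - 1)%nat)).
  { destruct (Nat.eq_dec (i s mod n) (k mod n)) as [Hhit|Hmiss].
    - destruct k as [|k']; [lia|].
      pose proof (before_previous_hit i n k' (S t') s Hbefore ltac:(lia) Hhit) as Hprev.
      destruct k' as [|k''].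
      + specialize (Hprev 0%nat (IsT0 i n)). lia.
      + exists (S k''). split; [lia|]. split.
        * rewrite Hhit. intro E. apply (mod_succ_neq n (S k'') Hn). symmetry. exact E.
        * apply IH; [lia|lia|]. intros T HT. specialize (Hprev T HT). lia.
    - exists k. split; [lia|]. split; [exact Hmiss|].
      apply IH; [lia|lia|]. intros T HT. specialize (Hbefore T HT). lia. }
  destruct Hlevel as [k0 [Hk0 [Hmiss Hx]]].
  assert (Hshrink : shrink_mono (m - (k0 - 1)) (r n m omega lam0 lam1 lam2 (i s))).
  { pose proof (Hi s). apply r_shrink_mono_level; lia || assumption. }
  assert (Hd : (m - (k - 1) <= m - (k0 - 1))%nat) by lia.
  split; [|split]; apply (vanish_mono _ _ _ Hd).
  - exact Hx.
  - apply (grad_vanish m (m - (k0 - 1)) _ (x (s - 1)%nat) (G s) ltac:(lia) Hshrink Hx).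
    apply HG; lia.
  - apply (prox_vanish m (m - (k0 - 1)) _ (gam s) (x (s - 1)%nat) (P s) ltac:(lia)
             (Hgam s ltac:(lia)) Hshrink Hx). apply HP; lia.
Qed.

Lemma indic_ext (A B : Prop) : (A <-> B) -> indic A = indic B.
Proof.
  intros H. unfold indic.
  destruct (excluded_middle_informative A); destruct (excluded_middle_informative B);
    tauto.
Qed.

Lemma indic_and (A B : Prop) : indic (A /\ B) = indic A * indic B.
Proof.
  unfold indic.
  destruct (excluded_middle_informative (A /\ B)); destruct (excluded_middle_informative A);
    destruct (excluded_middle_informative B); try tauto; ring.
Qed.

Lemma indic_not (A : Prop) : indic (~ A) = 1 - indic A.
Proof.
  unfold indic.
  destruct (excluded_middle_informative (~ A)); destruct (excluded_middle_informative A);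
    try tauto; ring.
Qed.

Lemma sumR_indic_point (N c : nat) (p : nat -> R) :
  (1 <= c <= N)%nat -> sumR N (fun j => p j * indic (j = c)) = p c.
Proof.
  intros Hc. rewrite <- (sumR_point N c p Hc). apply sumR_ext. intros j _.
  unfold indic. destruct (excluded_middle_informative (j = c));
    destruct (Nat.eq_dec j c); try contradiction; ring.
Qed.

Section WordSums.
Variables (n : nat) (p : nat -> R).

Lemma wsum_S (N : nat) (F : list nat -> R) :
  wsum n p (S N) F = sumR n (fun j => p j * wsum n p N (fun w => F (j :: w))).
Proof. reflexivity. Qed.

Lemma wsum_ext (N : nat) (F F' : list nat -> R) :
  (forall w, length w = N -> F w = F' w) -> wsum n p N F = wsum n p N F'.
Proof.
  revert F F'. induction N as [|N IH]; intros F F' H; simpl; [apply H; reflexivity|].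
  apply sumR_ext. intros j _. f_equal. apply IH. intros w Hw. apply H. simpl. lia.
Qed.

Lemma wsum_app (N1 N2 : nat) (F : list nat -> R) :
  wsum n p (N1 + N2) F = wsum n p N1 (fun w1 => wsum n p N2 (fun w2 => F (w1 ++ w2))).
Proof.
  revert F. induction N1 as [|N1 IH]; intros F; simpl; [reflexivity|].
  apply sumR_ext. intros j _. rewrite IH. reflexivity.
Qed.

Lemma wsum_scal (N : nat) (c : R) (F : list nat -> R) :
  wsum n p N (fun w => c * F w) = c * wsum n p N F.
Proof.
  revert F. induction N as [|N IH]; intros F; simpl; [reflexivity|].
  rewrite <- sumR_scal. apply sumR_ext. intros j _.
  rewrite (IH (fun w => F (j :: w))). ring.
Qed.

Definition first_hit (H : nat -> Prop) (s : nat) (i : nat -> nat) : Prop :=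
  (forall u, (1 <= u < s)%nat -> ~ H (i u)) /\ H (i s).

Lemma first_hit_ext (H : nat -> Prop) (s : nat) (i i' : nat -> nat) :
  (1 <= s)%nat -> (forall u, (1 <= u <= s)%nat -> i u = i' u) ->
  (first_hit H s i <-> first_hit H s i').
Proof.
  intros Hs Heq. unfold first_hit. rewrite (Heq s) by lia.
  split; intros [Hno Hyes]; split; try exact Hyes; intros u Hu;
    [rewrite <- Heq | rewrite Heq]; try lia; apply Hno, Hu.
Qed.

Lemma seq_of_cons (j : nat) (w : list nat) (u : nat) :
  (1 <= u)%nat -> seq_of (j :: w) (S u) = seq_of w u.
Proof.
  intros Hu. unfold seq_of. replace (S u - 1)%nat with (S (u - 1)) by lia. reflexivity.
Qed.

Lemma first_hit_cons (H : nat -> Prop) (s j : nat) (w : list nat) :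
  (1 <= s)%nat ->
  first_hit H (S s) (seq_of (j :: w)) <-> ~ H j /\ first_hit H s (seq_of w).
Proof.
  intros Hs. unfold first_hit. rewrite seq_of_cons by exact Hs. split.
  - intros [Hno Hyes]. split; [exact (Hno 1%nat ltac:(lia))|]. split; [|exact Hyes].
    intros u Hu. rewrite <- (seq_of_cons j) by lia. apply Hno. lia.
  - intros [Hj [Hno Hyes]]. split; [|exact Hyes].
    intros [|[|u]] Hu; [lia|exact Hj|].
    rewrite seq_of_cons by lia. apply Hno. lia.
Qed.

Lemma first_hit_law (H : nat -> Prop) (s : nat) :
  sumR n p = 1 -> (1 <= s)%nat ->
  wsum n p s (fun w => indic (first_hit H s (seq_of w))) =
  (1 - sumR n (fun j => p j * indic (H j))) ^ (s - 1) * sumR n (fun j => p j * indic (H j)).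
Proof.
  intros Hsum. set (qH := sumR n (fun j => p j * indic (H j))).
  assert (Hmiss : sumR n (fun j => p j * indic (~ H j)) = 1 - qH).
  { rewrite <- Hsum. unfold qH. rewrite <- sumR_minus.
    apply sumR_ext. intros j _. rewrite indic_not. ring. }
  induction s as [|s IH]; intros Hs; [lia|]. destruct s as [|s].
  - rewrite wsum_S, Rmult_1_l. apply sumR_ext. intros j _. simpl.
    f_equal. apply indic_ext. unfold first_hit. split; [tauto|].
    intros Hj. split; [intros; lia|exact Hj].
  - set (W := wsum n p (S s) (fun w => indic (first_hit H (S s) (seq_of w)))).
    transitivity (sumR n (fun j => W * (p j * indic (~ H j)))).
    + rewrite wsum_S. apply sumR_ext. intros j _.
      rewrite (wsum_ext _ _ (fun w => indic (~ H j) * indic (first_hit H (S s) (seq_of w)))).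
      * rewrite wsum_scal. unfold W. ring.
      * intros w _. rewrite <- indic_and. apply indic_ext, first_hit_cons. lia.
    + rewrite sumR_scal, Hmiss. unfold W. rewrite IH by lia.
      replace (S s - 1)%nat with s by lia. replace (S (S s) - 1)%nat with (S s) by lia.
      simpl. ring.
Qed.

End WordSums.

Lemma IsT_unique (i : nat -> nat) (n l T T' : nat) :
  IsT i n l T -> IsT i n l T' -> T = T'.
Proof.
  intros HT. revert T'.
  induction HT as [|k T1 T HT1 IH Hlt Hhit Hnone]; intros T' HT'.
  - inversion HT'. reflexivity.
  - inversion HT' as [|k' T1' T'' HT1' Hlt' Hhit' Hnone']; subst.
    pose proof (IH _ HT1'); subst T1'.
    destruct (Nat.lt_total T T') as [L|[E|L]]; [|exact E|].
    + exfalso. apply (Hnone' T); [lia|exact Hhit].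
    + exfalso. apply (Hnone T'); [lia|exact Hhit'].
Qed.

Lemma IsT_prefix (i i' : nat -> nat) (n l T : nat) :
  IsT i n l T -> (forall t, (1 <= t <= T)%nat -> i t = i' t) -> IsT i' n l T.
Proof.
  induction 1 as [|k T T' HT IH Hlt Hhit Hnone]; intros Heq; [constructor|].
  apply IsTS with T.
  - apply IH. intros; apply Heq; lia.
  - exact Hlt.
  - rewrite <- Heq by lia. exact Hhit.
  - intros t Ht. rewrite <- Heq by lia. apply Hnone, Ht.
Qed.

Lemma IsT_succ_iff (i : nat -> nat) (n k N s : nat) :
  IsT i n k N -> (1 <= s)%nat ->
  (IsT i n (S k) (N + s) <->
   first_hit (fun j => j mod n = S k mod n)%nat s (fun u => i (N + u)%nat)).
Proof.
  intros HN Hs. split.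
  - intros HS. inversion HS as [|k' T T' HT Hlt Hhit Hnone]; subst.
    rewrite (IsT_unique i n k T N HT HN) in *.
    split; [|exact Hhit]. intros u Hu. apply Hnone. lia.
  - intros [Hnone Hhit]. apply IsTS with N; [exact HN|lia|exact Hhit|].
    intros t Ht. replace t with (N + (t - N))%nat by lia. apply Hnone. lia.
Qed.

Lemma sumN_mono (s : nat -> nat) (l k : nat) : (l <= k)%nat -> (sumN l s <= sumN k s)%nat.
Proof.
  induction 1 as [|k Hlk IH]; [lia|]. simpl. lia.
Qed.

Definition hits_at (n k : nat) (s : nat -> nat) (i : nat -> nat) : Prop :=
  forall l, (1 <= l <= k)%nat -> IsT i n l (sumN l s).

Lemma hits_at_split (n k : nat) (s : nat -> nat) (w1 w2 : list nat) :
  length w1 = sumN k s -> (1 <= s (S k))%nat ->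
  hits_at n (S k) s (seq_of (w1 ++ w2)) <->
  hits_at n k s (seq_of w1) /\
  first_hit (fun j => j mod n = S k mod n)%nat (s (S k)) (seq_of w2).
Proof.
  intros Hlen Hs. set (N := sumN k s) in *. set (i := seq_of (w1 ++ w2)).
  assert (Hpre : forall t, (1 <= t <= N)%nat -> i t = seq_of w1 t).
  { intros t Ht. unfold i, seq_of. apply app_nth1. lia. }
  assert (Hpost : forall u, (1 <= u <= s (S k))%nat -> i (N + u)%nat = seq_of w2 u).
  { intros u Hu. unfold i, seq_of. rewrite app_nth2 by lia. f_equal. lia. }
  assert (Hprefix : hits_at n k s i <-> hits_at n k s (seq_of w1)).
  { pose proof (fun l (Hl : (l <= k)%nat) => sumN_mono s l k Hl) as Hmono.
    split; intros A l Hl; apply (IsT_prefix _ _ _ _ _ (A l Hl)); intros t Ht;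
      [apply Hpre | symmetry; apply Hpre]; specialize (Hmono l ltac:(lia)); lia. }
  assert (HN : hits_at n k s i -> IsT i n k N).
  { intros A. destruct k as [|k']; [constructor|]. apply A. lia. }
  rewrite <- Hprefix, <- (first_hit_ext _ _ (fun u => i (N + u)%nat)) by (assumption || exact Hpost).
  split.
  - intros A. assert (Ak : hits_at n k s i) by (intros l Hl; apply A; lia).
    split; [exact Ak|]. apply (proj1 (IsT_succ_iff i n k N (s (S k)) (HN Ak) Hs)).
    apply A. lia.
  - intros [Ak Hfirst] l Hl. destruct (Nat.eq_dec l (S k)) as [->|Hne]; [|apply Ak; lia].
    exact (proj2 (IsT_succ_iff i n k N (s (S k)) (HN Ak) Hs) Hfirst).
Qed.

Lemma hitting_time_law (n : nat) (p : nat -> R) :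
  n <> 0%nat -> sumR n p = 1 ->
  forall (k : nat) (s : nat -> nat), (forall l, (1 <= l <= k)%nat -> (1 <= s l)%nat) ->
  prob_prefix n p (sumN k s) (hits_at n k s) =
  prodR k (fun l => (1 - q n p l) ^ (s l - 1) * q n p l).
Proof.
  intros Hn Hsum k s. induction k as [|k IH]; intros Hs.
  - unfold prob_prefix, indic. simpl.
    destruct (excluded_middle_informative _) as [|Hnot]; [reflexivity|].
    exfalso. apply Hnot. intros l Hl. lia.
  - unfold prob_prefix in *. cbn [sumN prodR]. rewrite wsum_app.
    set (H := fun j => (j mod n = S k mod n)%nat).
    assert (Hq : sumR n (fun j => p j * indic (H j)) = q n p (S k)).
    { unfold q. replace (S k - 1)%nat with k by lia.
      pose proof (Nat.mod_upper_bound k n Hn).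
      rewrite <- (sumR_indic_point n (S (k mod n)) p) by lia.
      apply sumR_ext. intros j Hj. f_equal. apply indic_ext, residue_rep; assumption. }
    pose proof (first_hit_law n p H (s (S k)) Hsum (Hs (S k) ltac:(lia))) as Hgeo.
    rewrite Hq in Hgeo.
    transitivity (wsum n p (sumN k s) (fun w1 =>
      ((1 - q n p (S k)) ^ (s (S k) - 1) * q n p (S k)) * indic (hits_at n k s (seq_of w1)))).
    + apply wsum_ext. intros w1 Hw1. rewrite <- Hgeo, Rmult_comm, <- wsum_scal.
      apply wsum_ext. intros w2 _. rewrite <- indic_and. apply indic_ext.
      apply hits_at_split; [exact Hw1|apply Hs; lia].
    + rewrite wsum_scal, IH by (intros; apply Hs; lia).
      replace (S k - 1)%nat with k by lia. ring.
Qed.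

Theorem corollary2p3 (n m : nat) (lam0 lam1 lam2 omega : R) (p : nat -> R) :
  (2 <= n)%nat -> (1 <= m)%nat -> lam0 <> 0 -> 0 < lam1 -> 0 <= lam2 ->
  (forall j, (1 <= j <= n)%nat -> 0 <= p j) -> sumR n p = 1 ->
  (forall (i : nat -> nat) (gam : nat -> R) (x G P : nat -> nat -> R),
     (forall t, (1 <= t)%nat -> (1 <= i t <= n)%nat) ->
     (forall t, (1 <= t)%nat -> 0 < gam t) ->
     (forall j, (1 <= j <= m)%nat -> x 0%nat j = 0) ->
     (forall t, (1 <= t)%nat ->
        is_grad m (r n m omega lam0 lam1 lam2 (i t)) (x (t - 1)%nat) (G t)) ->
     (forall t, (1 <= t)%nat ->
        is_prox m (r n m omega lam0 lam1 lam2 (i t)) (gam t) (x (t - 1)%nat) (P t)) ->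
     (forall t, (1 <= t)%nat -> in_span m t x G P (x t)) ->
     forall k t : nat, (1 <= k <= m)%nat ->
       (forall T, IsT i n k T -> (t < T)%nat) ->
       inF m (k - 1) (x t))
  /\
  (forall (k : nat) (s : nat -> nat), (1 <= k)%nat ->
     (forall l, (1 <= l <= k)%nat -> (1 <= s l)%nat) ->
     prob_prefix n p (sumN k s)
       (fun i => forall l, (1 <= l <= k)%nat -> IsT i n l (sumN l s))
     = prodR k (fun l => (1 - q n p l) ^ (s l - 1) * q n p l)).
Proof.
  intros Hn _ _ Hlam1 Hlam2 _ Hsum. split.
  - intros i gam x G P. apply iterates_in_F; [exact Hn|lra|exact Hlam2].
  - intros k s _ Hs. exact (hitting_time_law n p ltac:(lia) Hsum k s Hs).
Qed.
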